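(* Let $\alpha^*=\mathbb{E}_C[\mathrm{wkt}_C(\vec e_{\mathsf o})]/\mathbb{E}_C[\mathrm{wkt}_C(\vec e_{\mathsf a})]$, where the expectation is over an input array $C$ of $N$ integers each drawn uniformly from $\{0,\dots,2^n-1\}$. Then $\alpha^*=\Omega\!\left(\frac{2^{n/2}}{N\log N}\right)$.
   Context: An input is an array $C[1..N]$ of $n$-bit integers, bits indexed $1$ (least significant) to $n$ (most significant); entries are assumed distinct. An energy vector $\vec e=(e_1,\dots,e_n)$ assigns energy $e_j\ge0$ to bit $j$. An inexact comparison of two items $u,v$ with energy vector $\vec e$ reads each bit $j$ of $u$ and of $v$ independently, flipped with probability $2^{-e_j}$, and orders $u,v$ according to the read values (i.e., by the most significant bit at which the read values differ); each comparison uses fresh independent randomness. The array is sorted by randomized quicksort (pivot chosen uniformly at random from the current subarray, each other element placed on a side by an inexact comparison with the pivot, then recursion). For items $u,v$, $Q(u,v,\vec e)$ is the event that in the output of quicksort $u$ and $v$ are in the wrong relative order. The expected weighted Kendall $\tau$ distance is $\mathrm{wkt}_C(\vec e)=\sum_{1\le a<b\le N}|C[a]-C[b]|\cdot\Pr[Q(C[a],C[b],\vec e)]$, the probability being over pivot choices and comparison errors. The inexactness aware vector is $\vec e_{\mathsf a}=(1,2,\dots,n)$ (bit $j$ gets energy $j$) and the oblivious vector is $\vec e_{\mathsf o}=(\frac{n+1}{2},\dots,\frac{n+1}{2})$. *)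

From Stdlib Require Import Reals Lra Lia Arith List.
Import ListNotations.
Open Scope R_scope.

Definition dist (A : Type) := list (R * A).

Definition dret {A} (x : A) : dist A := [(1, x)].

Definition dbind {A B} (d : dist A) (f : A -> dist B) : dist B :=
  flat_map (fun px => map (fun qy => (fst px * fst qy, snd qy)) (f (snd px))) d.

Definition dprob {A} (d : dist A) (P : A -> bool) : R :=
  fold_right Rplus 0 (map (fun px => if P (snd px) then fst px else 0) d).

(* An energy vector is e : nat -> R, with e j the energy of bit j (j = 1..n,
   bit 1 least significant).  Bit j is flipped with probability 2^(-e j). *)
Definition flip_prob (e : nat -> R) (j : nat) : R := Rpower 2 (- e j).

Definition read_bit (e : nat -> R) (x j : nat) : dist bool :=
  let b := Nat.testbit x (j - 1) in
  [(1 - flip_prob e j, b); (flip_prob e j, negb b)].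

Fixpoint read_low (e : nat -> R) (x k : nat) : dist nat :=
  match k with
  | O => dret 0%nat
  | S k' => dbind (read_low e x k') (fun r =>
            dbind (read_bit e x k) (fun b =>
            dret (r + (if b then 2 ^ k' else 0))%nat))
  end.

Definition read_val (n : nat) (e : nat -> R) (x : nat) : dist nat := read_low e x n.

(* inexact comparison: true iff the read value of u is strictly less than the
   read value of v (each comparison reads both items afresh) *)
Definition inexact_lt (n : nat) (e : nat -> R) (u v : nat) : dist bool :=
  dbind (read_val n e u) (fun ru =>
  dbind (read_val n e v) (fun rv =>
  dret (Nat.ltb ru rv))).

Definition uniform_pos (l : list nat) : dist nat :=
  map (fun i => (/ INR (length l), i)) (seq 0 (length l)).

Fixpoint remove_at {A} (i : nat) (l : list A) : list A :=
  match l, i with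
  | [], _ => []
  | _ :: t, O => t
  | h :: t, S i' => h :: remove_at i' t
  end.

Fixpoint partition_inexact (n : nat) (e : nat -> R) (C : nat -> nat) (pv : nat)
    (l : list nat) : dist (list nat * list nat) :=
  match l with
  | [] => dret ([], [])
  | x :: xs =>
      dbind (inexact_lt n e (C x) pv) (fun b =>
      dbind (partition_inexact n e C pv xs) (fun LR =>
      dret (if b then (x :: fst LR, snd LR) else (fst LR, x :: snd LR))))
  end.

(* fuel is at least the length of the list, so it never runs out *)
Fixpoint quicksort (n : nat) (e : nat -> R) (C : nat -> nat) (fuel : nat)
    (l : list nat) : dist (list nat) :=
  match fuel with
  | O => dret l
  | S f =>
    match l with
    | [] => dret []
    | _ =>
      dbind (uniform_pos l) (fun i =>
      let p := nth i l 0%nat in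
      dbind (partition_inexact n e C (C p) (remove_at i l)) (fun LR =>
      dbind (quicksort n e C f (fst LR)) (fun sL =>
      dbind (quicksort n e C f (snd LR)) (fun sR =>
      dret (sL ++ p :: sR)))))
    end
  end.

Fixpoint before (x y : nat) (s : list nat) : bool :=
  match s with
  | [] => false
  | z :: s' => if Nat.eqb z x then true else if Nat.eqb z y then false
               else before x y s'
  end.

Definition wrong_order (C : nat -> nat) (a b : nat) (s : list nat) : bool :=
  if Nat.ltb (C a) (C b) then before b a s
  else if Nat.ltb (C b) (C a) then before a b s
  else false.

Fixpoint sumR (l : list R) : R := match l with [] => 0 | x :: t => x + sumR t end.

Definition wkt (n N : nat) (C : nat -> nat) (e : nat -> R) : R :=
  let out := quicksort n e C N (seq 0 N) in
  sumR (map (fun b =>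
    sumR (map (fun a =>
      Rabs (INR (C a) - INR (C b)) * dprob out (wrong_order C a b))
      (seq 0 b)))
    (seq 0 N)).

Definition e_aware : nat -> R := fun j => INR j.
Definition e_obliv (n : nat) : nat -> R := fun _ => (INR n + 1) / 2.

Fixpoint all_arrays (N M : nat) : list (list nat) :=
  match N with
  | O => [[]]
  | S N' => flat_map (fun c => map (fun v => v :: c) (seq 0 M)) (all_arrays N' M)
  end.

Definition expected_wkt (n N : nat) (e : nat -> R) : R :=
  sumR (map (fun c => wkt n N (fun i => nth i c 0%nat) e) (all_arrays N (2 ^ n)))
  / (INR (2 ^ n)) ^ N.

Definition alpha_star (n N : nat) : R :=
  expected_wkt n N (e_obliv n) / expected_wkt n N e_aware.

(* Under the aware energies an inexact comparison of x and y can err only if a bit above the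
   leading bit of |x - y| flips, which happens with probability O(1 / |x - y|).  By induction on
   the recursion depth, quicksort therefore inverts two items of values x < y with probability
   O(N / (y - x)); every pair contributes O(N) to the weighted distance and
   E[wkt(e_a)] = O(N^3).

   Under the oblivious energies every bit flips with probability q = 2^(-(n+1)/2).  Let
   K = 2^(n-3) and let a, b, i be items with values in [2K, 3K), [4K, 5K) and [K, 2K).  When i is
   the first pivot, b goes left if only its top bit flips and a goes right if it is read exactly,
   together with probability Omega(q), and this inversion has weight at least K.  A constant
   fraction of the triples of positions of a uniform array have this shape, so
   E[wkt(e_o)] = Omega(K q N^2) = Omega(2^(n/2) N^2).  The ratio is thus Omega(2^(n/2) / N),
   which is more than claimed since ln N >= 1. *)

From Pilot Require Import Defs.
From Stdlib Require Import Reals Lra Lia Arith Bool List Permutation.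
Import ListNotations.
Open Scope R_scope.

(** * Finite distributions and sums *)

Definition dexpect {A} (d : Defs.dist A) (g : A -> R) : R :=
  fold_right Rplus 0 (map (fun px => fst px * g (snd px)) d).

Definition b2R (b : bool) : R := if b then 1 else 0.

Definition dmass {A} (d : Defs.dist A) : R := dexpect d (fun _ => 1).

Definition dsupp {A} (d : Defs.dist A) (P : A -> Prop) : Prop :=
  Forall (fun px => 0 <= fst px /\ P (snd px)) d.

Definition pdist {A} (d : Defs.dist A) (P : A -> Prop) : Prop := dsupp d P /\ dmass d = 1.

Lemma b2R_range b : 0 <= b2R b <= 1.
Proof. destruct b; simpl; lra. Qed.

Lemma b2R_andb a b : b2R (a && b) = b2R a * b2R b.
Proof. destruct a, b; simpl; ring. Qed.

Lemma b2R_negb a : b2R (negb a) = 1 - b2R a.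
Proof. destruct a; simpl; ring. Qed.

Ltac b2R_bounds :=
  repeat match goal with
  | |- context [b2R ?b] =>
      let h := fresh in pose proof (b2R_range b) as h; revert h; generalize (b2R b)
  end; intros.

Lemma dprob_dexpect {A} (d : Defs.dist A) P : dprob d P = dexpect d (fun x => b2R (P x)).
Proof.
  induction d as [|[w x] d IH]; [reflexivity|].
  unfold dprob, dexpect in *; simpl; rewrite IH; unfold b2R; destruct (P x); ring.
Qed.

Lemma dexpect_eq {A} (d : Defs.dist A) g h : (forall x, g x = h x) -> dexpect d g = dexpect d h.
Proof. intros H; induction d as [|p d IH]; unfold dexpect in *; simpl; rewrite ?H, ?IH; auto. Qed.

Lemma dexpect_app {A} (d1 d2 : Defs.dist A) g : dexpect (d1 ++ d2) g = dexpect d1 g + dexpect d2 g.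
Proof. induction d1 as [|p d IH]; unfold dexpect in *; simpl; [ring|rewrite IH; ring]. Qed.

Lemma dexpect_reweight {A} (d : Defs.dist A) w g :
  dexpect (map (fun qy => (w * fst qy, snd qy)) d) g = w * dexpect d g.
Proof. induction d as [|p d IH]; unfold dexpect in *; simpl; [ring|rewrite IH; ring]. Qed.

Lemma dexpect_ret {A} (x : A) g : dexpect (dret x) g = g x.
Proof. unfold dexpect, dret; simpl; ring. Qed.

Lemma dexpect_bind {A B} (d : Defs.dist A) (f : A -> Defs.dist B) g :
  dexpect (dbind d f) g = dexpect d (fun x => dexpect (f x) g).
Proof.
  induction d as [|[w x] d IH]; [reflexivity|].
  unfold dbind in *; simpl; rewrite dexpect_app, dexpect_reweight, IH; reflexivity.
Qed.

Lemma dexpect_bind_ret {A B} (d : Defs.dist A) (f : A -> B) g :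
  dexpect (dbind d (fun x => dret (f x))) g = dexpect d (fun x => g (f x)).
Proof. rewrite dexpect_bind; apply dexpect_eq; intros; apply dexpect_ret. Qed.

Lemma dexpect_plus {A} (d : Defs.dist A) g h :
  dexpect d (fun x => g x + h x) = dexpect d g + dexpect d h.
Proof. induction d as [|p d IH]; unfold dexpect in *; simpl; [ring|rewrite IH; ring]. Qed.

Lemma dexpect_scal_l {A} (d : Defs.dist A) c g : dexpect d (fun x => c * g x) = c * dexpect d g.
Proof. induction d as [|p d IH]; unfold dexpect in *; simpl; [ring|rewrite IH; ring]. Qed.

Lemma dexpect_scal_r {A} (d : Defs.dist A) c g : dexpect d (fun x => g x * c) = dexpect d g * c.
Proof. rewrite <- (Rmult_comm c), <- dexpect_scal_l; apply dexpect_eq; intros; ring. Qed.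

Lemma dexpect_const {A} (d : Defs.dist A) c : dexpect d (fun _ => c) = c * dmass d.
Proof. unfold dmass; rewrite <- dexpect_scal_l; apply dexpect_eq; intros; ring. Qed.

Lemma dexpect_le {A} (d : Defs.dist A) P g h :
  dsupp d P -> (forall x, P x -> g x <= h x) -> dexpect d g <= dexpect d h.
Proof.
  intros Hd H; induction Hd as [|[w x] d [Hw Hx] _ IH]; unfold dexpect in *; simpl in *; [lra|].
  apply Rplus_le_compat; auto; apply Rmult_le_compat_l; auto.
Qed.

Lemma dexpect_ext {A} (d : Defs.dist A) P g h :
  dsupp d P -> (forall x, P x -> g x = h x) -> dexpect d g = dexpect d h.
Proof.
  intros Hd H; apply Rle_antisym; eapply dexpect_le; eauto; intros x Hx; rewrite H; auto; lra.
Qed.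

Lemma dexpect_nonneg {A} (d : Defs.dist A) P g :
  dsupp d P -> (forall x, P x -> 0 <= g x) -> 0 <= dexpect d g.
Proof.
  intros Hd H; rewrite <- (Rmult_0_l (dmass d)), <- dexpect_const; eapply dexpect_le; eauto.
Qed.

Lemma dexpect_le_1 {A} (d : Defs.dist A) P g :
  pdist d P -> (forall x, P x -> g x <= 1) -> dexpect d g <= 1.
Proof. intros [Hd Hm] H; rewrite <- Hm; eapply dexpect_le; eauto. Qed.

Lemma dexpect_b2R_range {A} (d : Defs.dist A) P g :
  pdist d P -> 0 <= dexpect d (fun x => b2R (g x)) <= 1.
Proof.
  intros Hd; split; [eapply dexpect_nonneg; [apply Hd|] | eapply dexpect_le_1; [apply Hd|]];
    intros; apply b2R_range.
Qed.

Lemma dexpect_compl {A} (d : Defs.dist A) P g :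
  pdist d P -> dexpect d (fun x => 1 - g x) = 1 - dexpect d g.
Proof.
  intros [_ Hm]; unfold Rminus; rewrite dexpect_plus, dexpect_const, Hm.
  rewrite (dexpect_eq _ _ (fun x => -1 * g x)), dexpect_scal_l by (intros; ring); ring.
Qed.

Lemma pdist_ret {A} (x : A) (P : A -> Prop) : P x -> pdist (dret x) P.
Proof.
  intros Hx; split; [|unfold dmass; rewrite dexpect_ret; reflexivity].
  apply Forall_cons; [simpl; split; [lra|auto] | apply Forall_nil].
Qed.

Lemma pdist_bind {A B} (d : Defs.dist A) (f : A -> Defs.dist B) P Q :
  pdist d P -> (forall x, P x -> pdist (f x) Q) -> pdist (dbind d f) Q.
Proof.
  intros [Hd Hm] Hf; split.
  - clear Hm; induction Hd as [|[w x] d [Hw Hx] _ IH]; unfold dbind in *; simpl in *;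
      [constructor|].
    apply Forall_app; split; [apply Forall_map|exact IH].
    eapply Forall_impl; [|apply (proj1 (Hf x Hx))].
    intros [w' y] [? ?]; simpl; split; auto; apply Rmult_le_pos; auto.
  - unfold dmass in *; rewrite dexpect_bind, (dexpect_ext d P _ (fun _ => 1) Hd); auto.
    intros x Hx; apply (Hf x Hx).
Qed.

Lemma sumR_app l1 l2 : sumR (l1 ++ l2) = sumR l1 + sumR l2.
Proof. induction l1; simpl; [ring|rewrite IHl1; ring]. Qed.

Lemma sumR_plus {A} (l : list A) f g :
  sumR (map (fun x => f x + g x) l) = sumR (map f l) + sumR (map g l).
Proof. induction l; simpl; [ring|rewrite IHl; ring]. Qed.

Lemma sumR_scal {A} (l : list A) c f : sumR (map (fun x => c * f x) l) = c * sumR (map f l).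
Proof. induction l; simpl; [ring|rewrite IHl; ring]. Qed.

Lemma sumR_const {A} (l : list A) c : sumR (map (fun _ => c) l) = c * INR (length l).
Proof. induction l; simpl length; [simpl; ring|rewrite S_INR; simpl; rewrite IHl; ring]. Qed.

Lemma sumR_le {A} (l : list A) f g :
  (forall x, In x l -> f x <= g x) -> sumR (map f l) <= sumR (map g l).
Proof. induction l; simpl; intros H; [lra|apply Rplus_le_compat; auto]. Qed.

Lemma sumR_ext {A} (l : list A) f g :
  (forall x, In x l -> f x = g x) -> sumR (map f l) = sumR (map g l).
Proof. induction l; simpl; intros H; [lra|rewrite H, IHl; auto]. Qed.

Lemma sumR_nonneg {A} (l : list A) f : (forall x, In x l -> 0 <= f x) -> 0 <= sumR (map f l).
Proof.
  intros H; rewrite <- (Rmult_0_l (INR (length l))), <- sumR_const; apply sumR_le; auto.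
Qed.

Lemma sumR_swap {A B} (L : list A) (l : list B) F :
  sumR (map (fun c => sumR (map (F c) l)) L) =
  sumR (map (fun x => sumR (map (fun c => F c x) L)) l).
Proof.
  induction L as [|c L IH]; simpl.
  - rewrite sumR_const; ring.
  - rewrite IH, <- sumR_plus; reflexivity.
Qed.

Lemma sumR_flat_map {A B} (L : list A) (h : A -> list B) F :
  sumR (map F (flat_map h L)) = sumR (map (fun c => sumR (map F (h c))) L).
Proof. induction L; simpl; auto; rewrite map_app, sumR_app, IHL; auto. Qed.

Lemma sumR_seq_INR N : sumR (map INR (seq 0 N)) = INR N * (INR N - 1) / 2.
Proof.
  induction N; [simpl; field|].
  rewrite seq_S, map_app, sumR_app, IHN; simpl sumR; rewrite S_INR; simpl plus; field.
Qed.

Lemma sumR_seq_eqb N a :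
  sumR (map (fun i => b2R (i =? a)%nat) (seq 0 N)) = if (a <? N)%nat then 1 else 0.
Proof.
  induction N; [destruct a; reflexivity|].
  rewrite seq_S, map_app, sumR_app, IHN; simpl.
  destruct (Nat.ltb_spec a N), (Nat.ltb_spec a (S N)), (Nat.eqb_spec N a); simpl; try lia; ring.
Qed.

Lemma sumR_seq_other N a b : (a < N)%nat -> (b < N)%nat -> a <> b ->
  sumR (map (fun i => b2R (negb (i =? a)%nat && negb (i =? b)%nat)) (seq 0 N)) = INR N - 2.
Proof.
  intros Ha Hb Hab.
  rewrite (sumR_ext _ _ (fun i => 1 + (-1 * b2R (i =? a)%nat + -1 * b2R (i =? b)%nat))).
  - rewrite !sumR_plus, !sumR_scal, !sumR_seq_eqb, sumR_const, length_seq.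
    rewrite (proj2 (Nat.ltb_lt a N)), (proj2 (Nat.ltb_lt b N)) by auto; ring.
  - intros i _; destruct (Nat.eqb_spec i a), (Nat.eqb_spec i b); subst; simpl; try congruence; ring.
Qed.

Lemma Rle_div_of_mul a b c : 0 < c -> a * c <= b -> a <= b / c.
Proof.
  intros Hc H; apply Rmult_le_reg_r with c; auto; unfold Rdiv; rewrite Rmult_assoc, Rinv_l; lra.
Qed.

Lemma Rdiv_le_of_le_mul a b c : 0 < c -> a <= b * c -> a / c <= b.
Proof.
  intros Hc H; apply Rmult_le_reg_r with c; auto; unfold Rdiv; rewrite Rmult_assoc, Rinv_l; lra.
Qed.

(** * Inexact reads *)

Definition bit_val (k : nat) (b : bool) : nat := if b then 2 ^ k else 0.

Lemma pow2_pos k : (0 < 2 ^ k)%nat.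
Proof. apply Nat.neq_0_lt_0, Nat.pow_nonzero; lia. Qed.

Lemma mod_pow2_succ x k : (x mod 2 ^ S k = x mod 2 ^ k + bit_val k (Nat.testbit x k))%nat.
Proof.
  replace (2 ^ S k)%nat with (2 ^ k * 2)%nat by (simpl; lia).
  rewrite Nat.Div0.mod_mul_r, <- Nat.testbit_spec'; unfold bit_val.
  destruct (Nat.testbit x k); simpl; lia.
Qed.

Lemma div_pow2_small a k t : (a < 2 ^ k)%nat -> (k <= t)%nat -> (a / 2 ^ t = 0)%nat.
Proof.
  intros Ha Hkt; apply Nat.div_small.
  apply Nat.lt_le_trans with (2 ^ k)%nat; auto; apply Nat.pow_le_mono_r; lia.
Qed.

Lemma div_pow2_lt a b t : (a / 2 ^ t < b / 2 ^ t)%nat -> (a < b)%nat.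
Proof.
  intros H; destruct (le_lt_dec b a) as [Hba|]; auto.
  pose proof (Nat.Div0.div_le_mono _ _ (2 ^ t) Hba); lia.
Qed.

Lemma div_pow2_neq x y t :
  (2 ^ t <= (if (x <? y)%nat then y - x else x - y))%nat -> (x / 2 ^ t <> y / 2 ^ t)%nat.
Proof.
  assert (Hstep : forall u w, (u + 2 ^ t <= w)%nat -> (u / 2 ^ t < w / 2 ^ t)%nat).
  { intros u w Huw; apply Nat.lt_le_trans with ((u + 1 * 2 ^ t) / 2 ^ t)%nat.
    - rewrite Nat.div_add by (apply Nat.pow_nonzero; lia); lia.
    - apply Nat.Div0.div_le_mono; lia. }
  pose proof (pow2_pos t).
  destruct (Nat.ltb_spec x y); intros Hd.
  - specialize (Hstep x y ltac:(lia)); lia.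
  - specialize (Hstep y x ltac:(lia)); lia.
Qed.

Lemma div_pow2_snoc_bit r x k t : (r < 2 ^ k)%nat -> (r / 2 ^ t = (x mod 2 ^ k) / 2 ^ t)%nat ->
  ((r + bit_val k (Nat.testbit x k)) / 2 ^ t = (x mod 2 ^ S k) / 2 ^ t)%nat.
Proof.
  intros Hr H; rewrite mod_pow2_succ.
  destruct (le_lt_dec t k) as [Htk|Htk].
  - assert (E : forall b, bit_val k b = ((if b then 2 ^ (k - t) else 0) * 2 ^ t)%nat).
    { intros [|]; simpl; [rewrite <- Nat.pow_add_r; f_equal; lia | lia]. }
    rewrite !E, !Nat.div_add by (apply Nat.pow_nonzero; lia); lia.
  - pose proof (Nat.mod_upper_bound x (2 ^ k) (Nat.pow_nonzero 2 k ltac:(lia))).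
    rewrite !(div_pow2_small _ (S k) t); try lia;
      unfold bit_val; destruct (Nat.testbit x k); simpl; lia.
Qed.

Lemma div_pow2_snoc_low r x k t b : (k < t)%nat -> (r < 2 ^ k)%nat ->
  ((r + bit_val k b) / 2 ^ t = (x mod 2 ^ S k) / 2 ^ t)%nat.
Proof.
  intros Htk Hr.
  pose proof (Nat.mod_upper_bound x (2 ^ S k) (Nat.pow_nonzero 2 (S k) ltac:(lia))).
  rewrite !(div_pow2_small _ (S k) t); try lia; unfold bit_val; destruct b; simpl; lia.
Qed.

Lemma testbit_top v m : (2 ^ m <= v < 2 ^ S m)%nat -> Nat.testbit v m = true.
Proof.
  intros [H1 H2]; assert (E : (v / 2 ^ m = 1)%nat).
  { assert (1 <= v / 2 ^ m)%nat by (apply Nat.div_le_lower_bound; [apply Nat.pow_nonzero|]; lia).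
    assert (v / 2 ^ m < 2)%nat by (apply Nat.Div0.div_lt_upper_bound; simpl in H2; lia).
    lia. }
  pose proof (Nat.testbit_spec' v m) as T; rewrite E in T; simpl in T.
  destruct (Nat.testbit v m); simpl in T; congruence.
Qed.

Lemma ltb_div_pow2 r s x y t :
  (r / 2 ^ t = x / 2 ^ t)%nat -> (s / 2 ^ t = y / 2 ^ t)%nat -> (x / 2 ^ t <> y / 2 ^ t)%nat ->
  (r <? s)%nat = (x <? y)%nat.
Proof.
  intros Hr Hs Hxy.
  destruct (lt_eq_lt_dec (x / 2 ^ t) (y / 2 ^ t)) as [[L|L]|L]; [| lia |].
  - rewrite (proj2 (Nat.ltb_lt r s)), (proj2 (Nat.ltb_lt x y)); auto;
      eapply div_pow2_lt; rewrite ?Hr, ?Hs; eauto.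
  - rewrite (proj2 (Nat.ltb_ge r s)), (proj2 (Nat.ltb_ge x y)); auto;
      apply Nat.lt_le_incl; eapply div_pow2_lt; rewrite ?Hr, ?Hs; eauto.
Qed.

Fixpoint flip_tail (e : nat -> R) (t k : nat) : R :=
  match k with
  | O => 0
  | S k' => flip_tail e t k' + (if (t <=? k')%nat then flip_prob e (S k') else 0)
  end.

Fixpoint match_prob (e : nat -> R) (x y k : nat) : R :=
  match k with
  | O => 1
  | S k' => match_prob e x y k' *
      (if Bool.eqb (Nat.testbit x k') (Nat.testbit y k')
       then 1 - flip_prob e (S k') else flip_prob e (S k'))
  end.

Definition p_lt (n : nat) (e : nat -> R) (u v : nat) : R := dexpect (inexact_lt n e u v) b2R.

Lemma match_prob_mod e x y k m :
  (k <= m)%nat -> match_prob e x (y mod 2 ^ m) k = match_prob e x y k.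
Proof.
  induction k; intros H; simpl; auto.
  rewrite IHk, Nat.mod_pow2_bits_low by lia; auto.
Qed.

Section InexactReads.

Variable e : nat -> R.
Hypothesis e_nonneg : forall j, 0 <= e j.

Lemma flip_prob_range j : 0 < flip_prob e j <= 1.
Proof.
  unfold flip_prob; split; [apply exp_pos|].
  rewrite <- (Rpower_O 2) by lra; apply Rle_Rpower; [lra|]; pose proof (e_nonneg j); lra.
Qed.

Lemma match_prob_nonneg x y k : 0 <= match_prob e x y k.
Proof.
  induction k; simpl; [lra|]; apply Rmult_le_pos; auto.
  pose proof (flip_prob_range (S k)); destruct Bool.eqb; lra.
Qed.

Lemma dexpect_read_bit x j g : dexpect (read_bit e x j) g =
  (1 - flip_prob e j) * g (Nat.testbit x (j - 1))
  + flip_prob e j * g (negb (Nat.testbit x (j - 1))).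
Proof. unfold dexpect, read_bit; simpl; ring. Qed.

Lemma read_bit_pdist x j : pdist (read_bit e x j) (fun _ => True).
Proof.
  pose proof (flip_prob_range j); split.
  - repeat apply Forall_cons; simpl; try split; auto; try lra; apply Forall_nil.
  - unfold dmass; rewrite dexpect_read_bit; ring.
Qed.

Lemma read_low_succ x k : read_low e x (S k) =
  dbind (read_low e x k) (fun r =>
  dbind (read_bit e x (S k)) (fun b => dret (r + bit_val k b)%nat)).
Proof. reflexivity. Qed.

Lemma read_low_pdist x k : pdist (read_low e x k) (fun r => (r < 2 ^ k)%nat).
Proof.
  induction k as [|k IH]; [apply pdist_ret; simpl; lia|].
  rewrite read_low_succ; eapply pdist_bind; [exact IH|]; intros r Hr.
  eapply pdist_bind; [apply read_bit_pdist|]; intros b _.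
  apply pdist_ret; unfold bit_val; simpl in *; destruct b; lia.
Qed.

Lemma inexact_lt_pdist n u v : pdist (inexact_lt n e u v) (fun _ => True).
Proof.
  eapply pdist_bind; [apply read_low_pdist|]; intros.
  eapply pdist_bind; [apply read_low_pdist|]; intros.
  apply pdist_ret; auto.
Qed.

Lemma p_lt_range n u v : 0 <= p_lt n e u v <= 1.
Proof. apply (dexpect_b2R_range _ (fun _ => True) (fun b => b)), inexact_lt_pdist. Qed.

Lemma read_bit_high_err x k t r : (r < 2 ^ k)%nat ->
  dexpect (read_bit e x (S k))
    (fun b => b2R (negb ((r + bit_val k b) / 2 ^ t =? (x mod 2 ^ S k) / 2 ^ t)%nat))
  <= b2R (negb (r / 2 ^ t =? (x mod 2 ^ k) / 2 ^ t)%nat)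
     + (if (t <=? k)%nat then flip_prob e (S k) else 0).
Proof.
  intros Hr; rewrite dexpect_read_bit; replace (S k - 1)%nat with k by lia.
  pose proof (flip_prob_range (S k)).
  destruct (Nat.eqb_spec (r / 2 ^ t) ((x mod 2 ^ k) / 2 ^ t)) as [Heq|]; simpl.
  - destruct (Nat.leb_spec t k).
    + rewrite (div_pow2_snoc_bit r x k t Hr Heq), Nat.eqb_refl; simpl; b2R_bounds; nra.
    + rewrite !(div_pow2_snoc_low r x k t) by (auto; lia); rewrite Nat.eqb_refl; simpl; lra.
  - b2R_bounds; destruct (t <=? k)%nat; nra.
Qed.

Lemma read_high_err x t k :
  dexpect (read_low e x k) (fun r => b2R (negb (r / 2 ^ t =? (x mod 2 ^ k) / 2 ^ t)%nat))
  <= flip_tail e t k.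
Proof.
  induction k as [|k IH].
  - cbn [read_low Nat.pow]; rewrite dexpect_ret, Nat.mod_1_r, Nat.eqb_refl; simpl; lra.
  - rewrite read_low_succ, dexpect_bind.
    destruct (read_low_pdist x k) as [Hd Hm].
    eapply Rle_trans.
    + eapply dexpect_le; [exact Hd|]; intros r Hr.
      rewrite dexpect_bind_ret.
      apply (read_bit_high_err x k t r Hr).
    + rewrite dexpect_plus, dexpect_const, Hm; simpl; lra.
Qed.

Lemma read_bit_exact_lb x y k r : (y < 2 ^ S k)%nat ->
  b2R (r =? y mod 2 ^ k)%nat *
    (if Bool.eqb (Nat.testbit x k) (Nat.testbit y k)
     then 1 - flip_prob e (S k) else flip_prob e (S k))
  <= dexpect (read_bit e x (S k)) (fun b => b2R (r + bit_val k b =? y)%nat).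
Proof.
  intros Hy; rewrite dexpect_read_bit; replace (S k - 1)%nat with k by lia.
  pose proof (flip_prob_range (S k)).
  destruct (Nat.eqb_spec r (y mod 2 ^ k)) as [->|]; simpl; [|b2R_bounds; nra].
  assert (Hy' : y = (y mod 2 ^ k + bit_val k (Nat.testbit y k))%nat)
    by (rewrite <- mod_pow2_succ, Nat.mod_small; auto).
  destruct (Nat.testbit x k), (Nat.testbit y k); simpl in *; rewrite <- Hy', Nat.eqb_refl;
    simpl; b2R_bounds; nra.
Qed.

Lemma read_low_exact_lb x y k : (y < 2 ^ k)%nat ->
  match_prob e x y k <= dexpect (read_low e x k) (fun r => b2R (r =? y)%nat).
Proof.
  revert y; induction k as [|k IH]; intros y Hy.
  - simpl in Hy; replace y with 0%nat by lia; cbn [read_low]; rewrite dexpect_ret; simpl; lra.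
  - rewrite read_low_succ, dexpect_bind; simpl match_prob.
    destruct (read_low_pdist x k) as [Hd Hm].
    rewrite <- (match_prob_mod e x y k k) by lia.
    eapply Rle_trans;
      [apply Rmult_le_compat_r; [|apply IH, Nat.mod_upper_bound, Nat.pow_nonzero; lia]|].
    + pose proof (flip_prob_range (S k)); destruct Bool.eqb; lra.
    + rewrite <- dexpect_scal_r; eapply dexpect_le; [exact Hd|]; intros r _.
      rewrite dexpect_bind_ret; apply read_bit_exact_lb; auto.
Qed.

Lemma inexact_lt_lb n x y x' y' : (x' < 2 ^ n)%nat -> (y' < 2 ^ n)%nat ->
  match_prob e x x' n * match_prob e y y' n
  <= dexpect (inexact_lt n e x y) (fun b => b2R (Bool.eqb b (x' <? y')%nat)).
Proof.
  intros Hx Hy; unfold inexact_lt, read_val; rewrite dexpect_bind.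
  destruct (read_low_pdist x n) as [Hd Hm]; destruct (read_low_pdist y n) as [Hd' Hm'].
  eapply Rle_trans;
    [apply Rmult_le_compat_r; [apply match_prob_nonneg | apply (read_low_exact_lb x x' n Hx)]|].
  rewrite <- dexpect_scal_r; eapply dexpect_le; [exact Hd|]; intros r _.
  rewrite dexpect_bind_ret; destruct (Nat.eqb_spec r x') as [->|]; simpl.
  - rewrite Rmult_1_l; eapply Rle_trans; [apply (read_low_exact_lb y y' n Hy)|].
    eapply dexpect_le; [exact Hd'|]; intros s _.
    destruct (Nat.eqb_spec s y') as [->|]; [rewrite Bool.eqb_reflx|]; simpl; b2R_bounds; lra.
  - rewrite Rmult_0_l; eapply dexpect_nonneg; [exact Hd'|]; intros; apply b2R_range.
Qed.

Lemma inexact_lt_err n x y t : (x < 2 ^ n)%nat -> (y < 2 ^ n)%nat -> (x / 2 ^ t <> y / 2 ^ t)%nat ->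
  dexpect (inexact_lt n e x y) (fun b => b2R (negb (Bool.eqb b (x <? y)%nat)))
  <= 2 * flip_tail e t n.
Proof.
  intros Hx Hy Hxy; unfold inexact_lt, read_val; rewrite dexpect_bind.
  destruct (read_low_pdist x n) as [Hd Hm]; destruct (read_low_pdist y n) as [Hd' Hm'].
  set (err z r := b2R (negb (r / 2 ^ t =? z / 2 ^ t)%nat)).
  apply Rle_trans with
    (dexpect (read_low e x n) (fun r => err x r + dexpect (read_low e y n) (err y))).
  - eapply dexpect_le; [exact Hd|]; intros r _; rewrite dexpect_bind_ret.
    rewrite <- (Rmult_1_r (err x r)), <- Hm', <- dexpect_const, <- dexpect_plus.
    eapply dexpect_le; [exact Hd'|]; intros s _; unfold err.
    destruct (Nat.eqb_spec (r / 2 ^ t) (x / 2 ^ t)), (Nat.eqb_spec (s / 2 ^ t) (y / 2 ^ t));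
      simpl; try (b2R_bounds; lra).
    rewrite (ltb_div_pow2 r s x y t), Bool.eqb_reflx by auto; simpl; lra.
  - pose proof (read_high_err x t n) as Ex; pose proof (read_high_err y t n) as Ey.
    rewrite Nat.mod_small in Ex, Ey by auto.
    rewrite dexpect_plus, dexpect_const, Hm; unfold err; lra.
Qed.

End InexactReads.

(** * Randomized quicksort *)

Definition memb (x : nat) (l : list nat) : bool := existsb (Nat.eqb x) l.

Lemma memb_In x l : memb x l = true <-> In x l.
Proof.
  unfold memb; rewrite existsb_exists; split.
  - intros [y [Hy E]]; apply Nat.eqb_eq in E; subst; auto.
  - intros H; exists x; split; auto; apply Nat.eqb_refl.
Qed.

Lemma memb_false x l : ~ In x l -> memb x l = false.
Proof. intros H; destruct (memb x l) eqn:E; auto; apply memb_In in E; tauto. Qed.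

Lemma memb_cons_neq x z l : x <> z -> memb x (z :: l) = memb x l.
Proof. intros H; simpl; rewrite (proj2 (Nat.eqb_neq x z) H); reflexivity. Qed.

Lemma perm_In_iff (s l : list nat) x : Permutation s l -> (In x s <-> In x l).
Proof. intros H; split; apply Permutation_in; [|apply Permutation_sym]; auto. Qed.

Definition split_ok (l : list nat) (LR : list nat * list nat) : Prop :=
  Permutation (fst LR ++ snd LR) l.

Lemma split_ok_notin z zs LR : ~ In z zs -> split_ok zs LR -> ~ In z (fst LR).
Proof. intros Hz HP HL; apply Hz, (Permutation_in _ HP), in_or_app; auto. Qed.

Lemma split_ok_In l LR x : split_ok l LR -> In x l -> ~ In x (fst LR) -> In x (snd LR).
Proof. intros HP Hx HL; apply (perm_In_iff _ _ _ HP), in_app_or in Hx; tauto. Qed.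

Lemma split_ok_facts l LR : split_ok l LR -> NoDup l ->
  NoDup (fst LR) /\ NoDup (snd LR) /\
  (length (fst LR) <= length l)%nat /\ (length (snd LR) <= length l)%nat.
Proof.
  intros HP Hnd; apply Permutation_sym in HP.
  pose proof (Permutation_NoDup HP Hnd) as Hnd'.
  apply Permutation_length in HP; rewrite length_app in HP.
  repeat split; [eapply NoDup_app_remove_r | eapply NoDup_app_remove_l | lia | lia]; eauto.
Qed.

Section Partition.

Variables (n : nat) (e : nat -> R) (C : nat -> nat) (pv : nat).
Hypothesis e_nonneg : forall j, 0 <= e j.

Lemma partition_pdist l : pdist (partition_inexact n e C pv l) (split_ok l).
Proof.
  induction l as [|x xs IH]; [apply pdist_ret; constructor|].
  eapply pdist_bind; [apply inexact_lt_pdist; auto|]; intros b _.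
  eapply pdist_bind; [exact IH|]; intros [lo hi] HP; apply pdist_ret.
  unfold split_ok in *; destruct b; simpl in *.
  - constructor; auto.
  - eapply Permutation_trans; [apply Permutation_sym, Permutation_middle|]; constructor; auto.
Qed.

Lemma dexpect_partition_cons z zs g :
  dexpect (partition_inexact n e C pv (z :: zs)) g =
  dexpect (inexact_lt n e (C z) pv) (fun b => dexpect (partition_inexact n e C pv zs)
    (fun LR => g (if b then (z :: fst LR, snd LR) else (fst LR, z :: snd LR)))).
Proof.
  simpl partition_inexact; rewrite dexpect_bind; apply dexpect_eq; intros b.
  apply dexpect_bind_ret.
Qed.

Lemma partition_left_prob l x : NoDup l -> In x l ->
  dexpect (partition_inexact n e C pv l) (fun LR => b2R (memb x (fst LR))) = p_lt n e (C x) pv.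
Proof.
  induction l as [|z zs IH]; intros Hnd Hx; [destruct Hx|].
  apply NoDup_cons_iff in Hnd as [Hz Hnd].
  destruct (partition_pdist zs) as [Hd Hm].
  destruct (inexact_lt_pdist _ e_nonneg n (C z) pv) as [Hd1 Hm1].
  rewrite dexpect_partition_cons.
  destruct (Nat.eq_dec x z) as [->|Hxz].
  - apply dexpect_eq; intros b.
    rewrite (dexpect_ext _ _ _ (fun _ => b2R b) Hd), dexpect_const, Hm; [ring|].
    intros LR HP; destruct b; simpl; [rewrite Nat.eqb_refl; auto|].
    rewrite memb_false; auto; eapply split_ok_notin; eauto.
  - destruct Hx as [Hx|Hx]; [congruence|].
    rewrite (dexpect_ext _ _ _ (fun _ => p_lt n e (C x) pv) Hd1), dexpect_const, Hm1; [ring|].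
    intros b _; rewrite <- (IH Hnd Hx); apply dexpect_eq; intros LR.
    destruct b; simpl fst; rewrite ?memb_cons_neq; auto.
Qed.

Lemma partition_left_right_prob l x y : NoDup l -> In x l -> In y l -> x <> y ->
  dexpect (partition_inexact n e C pv l) (fun LR => b2R (memb x (fst LR) && negb (memb y (fst LR))))
  = p_lt n e (C x) pv * (1 - p_lt n e (C y) pv).
Proof.
  induction l as [|z zs IH]; intros Hnd Hx Hy Hxy; [destruct Hx|].
  apply NoDup_cons_iff in Hnd as [Hz Hnd].
  pose proof (partition_pdist zs) as Hpd; destruct Hpd as [Hd Hm].
  pose proof (inexact_lt_pdist _ e_nonneg n (C z) pv) as Hlt; destruct Hlt as [Hd1 Hm1].
  rewrite dexpect_partition_cons.
  destruct (Nat.eq_dec x z) as [->|Hxz]; [|destruct (Nat.eq_dec y z) as [->|Hyz]].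
  - destruct Hy as [|Hy]; [congruence|].
    unfold p_lt at 1; rewrite <- dexpect_scal_r; apply dexpect_eq; intros b.
    rewrite (dexpect_ext _ _ _ (fun LR => b2R b * (1 - b2R (memb y (fst LR)))) Hd).
    + rewrite dexpect_scal_l, (dexpect_compl _ _ _ (conj Hd Hm)), partition_left_prob; auto.
    + intros LR HP; pose proof (split_ok_notin _ _ _ Hz HP).
      rewrite b2R_andb, b2R_negb; destruct b; simpl fst.
      * rewrite (memb_cons_neq y) by auto; simpl; rewrite Nat.eqb_refl; simpl; ring.
      * rewrite (memb_false z) by auto; simpl; ring.
  - destruct Hx as [|Hx]; [congruence|].
    unfold p_lt at 2; rewrite <- (dexpect_compl _ _ _ (conj Hd1 Hm1)), <- dexpect_scal_l.
    apply dexpect_eq; intros b.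
    rewrite (dexpect_ext _ _ _ (fun LR => b2R (memb x (fst LR)) * (1 - b2R b)) Hd).
    + rewrite dexpect_scal_r, partition_left_prob; auto.
    + intros LR HP; pose proof (split_ok_notin _ _ _ Hz HP).
      rewrite b2R_andb, b2R_negb; destruct b; simpl fst.
      * rewrite (memb_cons_neq x) by auto; simpl; rewrite Nat.eqb_refl; simpl; ring.
      * rewrite (memb_false z) by auto; simpl; ring.
  - destruct Hx as [|Hx]; [congruence|]; destruct Hy as [|Hy]; [congruence|].
    rewrite (dexpect_ext _ _ _ (fun _ => p_lt n e (C x) pv * (1 - p_lt n e (C y) pv)) Hd1),
      dexpect_const, Hm1; [ring|].
    intros b _; rewrite <- (IH Hnd Hx Hy Hxy); apply dexpect_eq; intros LR.
    destruct b; simpl fst; rewrite ?(memb_cons_neq x), ?(memb_cons_neq y); auto.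
Qed.

End Partition.

Lemma dexpect_uniform_pos l g :
  dexpect (uniform_pos l) g = / INR (length l) * sumR (map g (seq 0 (length l))).
Proof.
  unfold uniform_pos; induction (seq 0 (length l)); unfold dexpect in *; simpl; [ring|].
  rewrite IHl0; ring.
Qed.

Lemma uniform_pos_pdist l : l <> [] -> pdist (uniform_pos l) (fun i => (i < length l)%nat).
Proof.
  intros Hl; assert (Hlen : (0 < length l)%nat) by (destruct l; simpl; [congruence|lia]).
  split.
  - apply Forall_map, Forall_forall; intros i Hi; apply in_seq in Hi; simpl; split; [|lia].
    left; apply Rinv_0_lt_compat, lt_0_INR; lia.
  - unfold dmass; rewrite dexpect_uniform_pos, sumR_const, length_seq; field.
    apply not_0_INR; lia.
Qed.

Lemma remove_at_perm (l : list nat) i : (i < length l)%nat ->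
  Permutation l (nth i l 0%nat :: remove_at i l).
Proof.
  revert i; induction l as [|h t IH]; intros i Hi; simpl in Hi; [lia|].
  destruct i; simpl; [apply Permutation_refl|].
  eapply Permutation_trans; [apply perm_skip, (IH i); lia | apply perm_swap].
Qed.

Lemma before_app_l y x s1 s2 : In y s1 \/ In x s1 -> before y x (s1 ++ s2) = before y x s1.
Proof.
  induction s1 as [|z s IH]; intros H; simpl in *; [destruct H as [[]|[]]|].
  destruct (Nat.eqb_spec z y), (Nat.eqb_spec z x); auto.
  apply IH; destruct H as [[H|H]|[H|H]]; try congruence; auto.
Qed.

Lemma before_app_r y x s1 s2 : ~ In y s1 -> ~ In x s1 -> before y x (s1 ++ s2) = before y x s2.
Proof.
  induction s1 as [|z s IH]; intros H1 H2; simpl in *; auto.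
  destruct (Nat.eqb_spec z y); [tauto|]; destruct (Nat.eqb_spec z x); [tauto|]; auto.
Qed.

Lemma before_only_l y x s : In y s -> ~ In x s -> before y x s = true.
Proof.
  induction s as [|z s IH]; intros H1 H2; simpl in *; [destruct H1|].
  destruct (Nat.eqb_spec z y); auto; destruct (Nat.eqb_spec z x); [tauto|].
  apply IH; [destruct H1; [congruence|auto]|tauto].
Qed.

Lemma before_only_r y x s : In x s -> ~ In y s -> before y x s = false.
Proof.
  induction s as [|z s IH]; intros H1 H2; simpl in *; [destruct H1|].
  destruct (Nat.eqb_spec z y); [tauto|]; destruct (Nat.eqb_spec z x); auto.
  apply IH; [destruct H1; [congruence|auto]|tauto].
Qed.

Section Quicksort.

Variables (n : nat) (e : nat -> R) (C : nat -> nat).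
Hypothesis e_nonneg : forall j, 0 <= e j.

Lemma quicksort_succ f l : l <> [] -> quicksort n e C (S f) l =
  dbind (uniform_pos l) (fun i =>
  dbind (partition_inexact n e C (C (nth i l 0%nat)) (remove_at i l)) (fun LR =>
  dbind (quicksort n e C f (fst LR)) (fun sL =>
  dbind (quicksort n e C f (snd LR)) (fun sR =>
  dret (sL ++ nth i l 0%nat :: sR))))).
Proof. destruct l; [congruence|reflexivity]. Qed.

Lemma quicksort_perm f l : pdist (quicksort n e C f l) (fun s => Permutation s l).
Proof.
  revert l; induction f as [|f IH]; intros l; [apply pdist_ret, Permutation_refl|].
  destruct l as [|h t]; [apply pdist_ret; constructor|].
  rewrite quicksort_succ by congruence.
  eapply pdist_bind; [apply uniform_pos_pdist; congruence|]; intros i Hi.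
  eapply pdist_bind; [apply partition_pdist; auto|]; intros [lo hi] HP.
  eapply pdist_bind; [apply IH|]; intros sL HL.
  eapply pdist_bind; [apply IH|]; intros sR HR; apply pdist_ret.
  unfold split_ok in HP; simpl in *.
  eapply Permutation_trans; [apply Permutation_sym, Permutation_middle|].
  eapply Permutation_trans; [|apply Permutation_sym, remove_at_perm; exact Hi].
  constructor; eapply Permutation_trans; [|exact HP]; apply Permutation_app; auto.
Qed.

Definition p_before f l y x : R := dexpect (quicksort n e C f l) (fun s => b2R (before y x s)).

Definition p_before_join f lo hi p y x : R :=
  dexpect (quicksort n e C f lo) (fun sL =>
  dexpect (quicksort n e C f hi) (fun sR => b2R (before y x (sL ++ p :: sR)))).

Lemma p_before_join_range f lo hi p y x : 0 <= p_before_join f lo hi p y x <= 1.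
Proof.
  unfold p_before_join; split.
  - eapply dexpect_nonneg; [apply quicksort_perm|]; intros.
    eapply dexpect_nonneg; [apply quicksort_perm|]; intros; apply b2R_range.
  - eapply dexpect_le_1; [apply quicksort_perm|]; intros.
    eapply dexpect_le_1; [apply quicksort_perm|]; intros; apply b2R_range.
Qed.

Lemma p_before_join_const f lo hi p y x c :
  (forall sL sR, Permutation sL lo -> Permutation sR hi -> before y x (sL ++ p :: sR) = c) ->
  p_before_join f lo hi p y x = b2R c.
Proof.
  intros H; unfold p_before_join.
  destruct (quicksort_perm f lo) as [Hlo Hmlo]; destruct (quicksort_perm f hi) as [Hhi Hmhi].
  rewrite (dexpect_ext _ _ _ (fun _ => b2R c) Hlo), dexpect_const, Hmlo; [ring|].
  intros sL HsL; rewrite (dexpect_ext _ _ _ (fun _ => b2R c) Hhi), dexpect_const, Hmhi; [ring|].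
  intros sR HsR; rewrite H; auto.
Qed.

Lemma p_before_join_split_yes f lo hi p y x :
  In y lo -> ~ In x lo -> p_before_join f lo hi p y x = 1.
Proof.
  intros Hy Hx; apply (p_before_join_const f lo hi p y x true); intros sL sR Hlo _.
  rewrite before_app_l by (left; apply (perm_In_iff _ _ _ Hlo); auto).
  apply before_only_l; rewrite (perm_In_iff _ _ _ Hlo); auto.
Qed.

Lemma p_before_join_split_no f lo hi p y x :
  In x lo -> ~ In y lo -> p_before_join f lo hi p y x = 0.
Proof.
  intros Hx Hy; apply (p_before_join_const f lo hi p y x false); intros sL sR Hlo _.
  rewrite before_app_l by (right; apply (perm_In_iff _ _ _ Hlo); auto).
  apply before_only_r; rewrite (perm_In_iff _ _ _ Hlo); auto.
Qed.

Lemma p_before_join_pivot_r f lo hi y x : x <> y -> ~ In x lo -> ~ In y lo ->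
  p_before_join f lo hi x y x = 0.
Proof.
  intros Hxy Hx Hy; apply (p_before_join_const f lo hi x y x false); intros sL sR Hlo _.
  rewrite before_app_r by (rewrite (perm_In_iff _ _ _ Hlo); auto); simpl.
  rewrite (proj2 (Nat.eqb_neq x y)), Nat.eqb_refl; auto.
Qed.

Lemma p_before_join_in_l f lo hi p y x : In y lo -> In x lo ->
  p_before_join f lo hi p y x = p_before f lo y x.
Proof.
  intros Hy Hx; unfold p_before_join, p_before.
  destruct (quicksort_perm f lo) as [Hlo _]; destruct (quicksort_perm f hi) as [Hhi Hmhi].
  eapply dexpect_ext; [exact Hlo|]; intros sL HsL.
  rewrite (dexpect_ext _ _ _ (fun _ => b2R (before y x sL)) Hhi), dexpect_const, Hmhi; [ring|].
  intros sR _; rewrite before_app_l; auto; left; apply (perm_In_iff _ _ _ HsL); auto.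
Qed.

Lemma p_before_join_in_r f lo hi p y x : ~ In y lo -> ~ In x lo -> p <> y -> p <> x ->
  p_before_join f lo hi p y x = p_before f hi y x.
Proof.
  intros Hy Hx Hpy Hpx; unfold p_before_join.
  destruct (quicksort_perm f lo) as [Hlo Hmlo]; destruct (quicksort_perm f hi) as [Hhi _].
  rewrite (dexpect_ext _ _ _ (fun _ => p_before f hi y x) Hlo), dexpect_const, Hmlo; [ring|].
  intros sL HsL; unfold p_before; eapply dexpect_ext; [exact Hhi|]; intros sR _.
  rewrite before_app_r by (rewrite (perm_In_iff _ _ _ HsL); auto); simpl.
  rewrite (proj2 (Nat.eqb_neq p y)), (proj2 (Nat.eqb_neq p x)); auto.
Qed.

Definition p_before_pivot f l p y x : R :=
  dexpect (partition_inexact n e C (C p) l) (fun LR => p_before_join f (fst LR) (snd LR) p y x).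

Lemma p_before_succ f l y x : l <> [] ->
  p_before (S f) l y x =
  dexpect (uniform_pos l) (fun i => p_before_pivot f (remove_at i l) (nth i l 0%nat) y x).
Proof.
  intros Hl; unfold p_before, p_before_pivot, p_before_join; rewrite quicksort_succ by auto.
  rewrite dexpect_bind; apply dexpect_eq; intros i.
  rewrite dexpect_bind; apply dexpect_eq; intros LR.
  rewrite dexpect_bind; apply dexpect_eq; intros sL.
  rewrite dexpect_bind_ret; reflexivity.
Qed.

End Quicksort.

(** * Uniform random arrays *)

Fixpoint prodN (N : nat) (g : nat -> R) : R :=
  match N with O => 1 | S N' => g 0%nat * prodN N' (fun j => g (S j)) end.

Lemma prodN_ext N f g : (forall j, (j < N)%nat -> f j = g j) -> prodN N f = prodN N g.
Proof.
  revert f g; induction N; intros f g H; simpl; auto.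
  rewrite H by lia; f_equal; apply IHN; intros; apply H; lia.
Qed.

Lemma prodN_mult N f g : prodN N (fun j => f j * g j) = prodN N f * prodN N g.
Proof. revert f g; induction N; intros f g; simpl; [ring|rewrite IHN; ring]. Qed.

Lemma prodN_const N c : prodN N (fun _ => c) = c ^ N.
Proof. induction N; simpl; auto; rewrite IHN; auto. Qed.

Lemma prodN_single N a c : (a < N)%nat -> prodN N (fun j => if (j =? a)%nat then c else 1) = c.
Proof.
  revert a; induction N; intros a H; [lia|simpl].
  destruct a as [|a]; simpl; [rewrite prodN_const, pow1; ring | rewrite IHN by lia; ring].
Qed.

Lemma prodN_select N k g c : (k < N)%nat ->
  prodN N (fun j => if (j =? k)%nat then g (nth j c 0%nat) else 1) = g (nth k c 0%nat).
Proof.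
  intros Hk; rewrite <- (prodN_single N k (g (nth k c 0%nat))) by auto.
  apply prodN_ext; intros j _; destruct (Nat.eqb_spec j k); subst; reflexivity.
Qed.

Lemma sumR_all_arrays_prod M N (G : nat -> nat -> R) :
  sumR (map (fun c => prodN N (fun j => G j (nth j c 0%nat))) (all_arrays N M)) =
  prodN N (fun j => sumR (map (G j) (seq 0 M))).
Proof.
  revert G; induction N as [|N IH]; intros G; [simpl; ring|].
  simpl all_arrays; rewrite sumR_flat_map.
  transitivity (sumR (map (fun c => sumR (map (G 0%nat) (seq 0 M)) *
      prodN N (fun j => G (S j) (nth j c 0%nat))) (all_arrays N M))).
  - apply sumR_ext; intros c _; rewrite map_map; simpl.
    rewrite Rmult_comm, <- sumR_scal; apply sumR_ext; intros; ring.
  - rewrite sumR_scal, (IH (fun j => G (S j))); reflexivity.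
Qed.

Lemma all_arrays_bound N M c i : (0 < M)%nat -> In c (all_arrays N M) -> (nth i c 0%nat < M)%nat.
Proof.
  intros HM; revert c i; induction N; intros c i Hc; simpl in Hc.
  - destruct Hc as [<-|[]]; destruct i; simpl; lia.
  - apply in_flat_map in Hc as [c' [Hc' Hv]]; apply in_map_iff in Hv as [v [<- Hv]].
    apply in_seq in Hv; destruct i; simpl; auto; lia.
Qed.

Lemma sumR_all_arrays_const N M c : sumR (map (fun _ => c) (all_arrays N M)) = c * INR M ^ N.
Proof.
  revert c; induction N; intros c; simpl; [ring|].
  rewrite sumR_flat_map, (sumR_ext _ _ (fun _ => c * INR M)), IHN; [ring|].
  intros; rewrite map_map, sumR_const, length_seq; reflexivity.
Qed.

Definition in_range (lo hi x : nat) : bool := ((lo <=? x) && (x <? hi))%nat.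

Lemma in_range_spec lo hi x : in_range lo hi x = true <-> (lo <= x < hi)%nat.
Proof. unfold in_range; rewrite andb_true_iff, Nat.leb_le, Nat.ltb_lt; tauto. Qed.

Lemma sumR_seq_in_range lo hi M : (lo <= hi)%nat ->
  sumR (map (fun x => b2R (in_range lo hi x)) (seq 0 M)) = INR (Nat.min hi M - Nat.min lo M).
Proof.
  intros H; induction M; [rewrite !Nat.min_0_r; reflexivity|].
  rewrite seq_S, map_app, sumR_app, IHM; simpl; unfold in_range.
  destruct (Nat.leb_spec lo M), (Nat.ltb_spec M hi); simpl; rewrite ?Rplus_0_r, ?Rplus_0_l;
    try rewrite <- S_INR; f_equal; lia.
Qed.

Lemma sumR_all_arrays_three N M (A B P : nat -> bool) a b i : (0 < M)%nat ->
  (a < N)%nat -> (b < N)%nat -> (i < N)%nat -> a <> b -> a <> i -> b <> i ->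
  let freq X := sumR (map (fun x => b2R (X x)) (seq 0 M)) / INR M in
  sumR (map (fun c => b2R (A (nth a c 0%nat) && B (nth b c 0%nat) && P (nth i c 0%nat)))
            (all_arrays N M))
  = INR M ^ N * (freq A * freq B * freq P).
Proof.
  intros HM Ha Hb Hi Hab Hai Hbi freq.
  assert (HM' : INR M <> 0) by (apply not_0_INR; lia).
  set (sel (j k : nat) (X : nat -> bool) x := if (j =? k)%nat then b2R (X x) else 1).
  set (G j x := sel j a A x * sel j b B x * sel j i P x).
  rewrite (sumR_ext _ _ (fun c => prodN N (fun j => G j (nth j c 0%nat)))).
  - rewrite sumR_all_arrays_prod.
    rewrite (prodN_ext N _ (fun j => INR M * ((if (j =? a)%nat then freq A else 1) *
        (if (j =? b)%nat then freq B else 1) * (if (j =? i)%nat then freq P else 1)))).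
    + rewrite prodN_mult, prodN_const, !prodN_mult, !prodN_single by auto; reflexivity.
    + intros j _; unfold G, sel, freq.
      destruct (Nat.eqb_spec j a), (Nat.eqb_spec j b), (Nat.eqb_spec j i); subst; try congruence;
        first [ rewrite (sumR_ext _ _ (fun x => b2R (A x))) by (intros; ring)
              | rewrite (sumR_ext _ _ (fun x => b2R (B x))) by (intros; ring)
              | rewrite (sumR_ext _ _ (fun x => b2R (P x))) by (intros; ring)
              | rewrite (sumR_ext _ _ (fun _ => 1)) by (intros; ring) ];
        rewrite ?sumR_const, ?length_seq; field; auto.
  - intros c _; unfold G; rewrite !prodN_mult, !b2R_andb; unfold sel.
    rewrite (prodN_select N a (fun x => b2R (A x))), (prodN_select N b (fun x => b2R (B x))),
      (prodN_select N i (fun x => b2R (P x))) by auto; reflexivity.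
Qed.

(** * Aware energies: an upper bound *)

Lemma e_aware_nonneg j : 0 <= e_aware j.
Proof. apply pos_INR. Qed.

Lemma flip_prob_aware j : flip_prob e_aware j = / 2 ^ j.
Proof. unfold flip_prob, e_aware; rewrite Rpower_Ropp, Rpower_pow; lra. Qed.

Lemma flip_tail_aware t k : flip_tail e_aware t k <= / 2 ^ t.
Proof.
  assert (H : flip_tail e_aware t k + / 2 ^ Nat.max t k <= / 2 ^ t).
  { induction k as [|k IH]; simpl; [rewrite Nat.max_0_r; lra|].
    pose proof (pow_lt 2 k ltac:(lra)).
    destruct (Nat.leb_spec t k).
    - rewrite Nat.max_r in * by lia; rewrite flip_prob_aware; simpl.
      replace (/ (2 * 2 ^ k)) with (/ 2 * / 2 ^ k) by (field; lra); lra.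
    - rewrite Nat.max_l in * by lia; lra. }
  pose proof (Rinv_0_lt_compat _ (pow_lt 2 (Nat.max t k) ltac:(lra))); lra.
Qed.

(** With energy [j] on bit [j], an error above the leading bit of [|x - y|] has probability
    [O(1 / |x - y|)]. *)
Lemma aware_lt_err n x y : (x < 2 ^ n)%nat -> (y < 2 ^ n)%nat -> x <> y ->
  dexpect (inexact_lt n e_aware x y) (fun b => b2R (negb (Bool.eqb b (x <? y)%nat)))
  <= 4 / INR (if (x <? y)%nat then y - x else x - y).
Proof.
  intros Hx Hy Hxy; set (d := (if (x <? y)%nat then y - x else x - y)%nat).
  assert (Hd : (0 < d)%nat) by (unfold d; destruct (Nat.ltb_spec x y); lia).
  set (t := Nat.log2 d); destruct (Nat.log2_spec d Hd) as [Hlo Hhi]; fold t in Hlo, Hhi.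
  eapply Rle_trans;
    [apply (inexact_lt_err e_aware e_aware_nonneg n x y t Hx Hy), div_pow2_neq, Hlo|].
  assert (HD : INR d < 2 * 2 ^ t).
  { replace (2 * 2 ^ t) with (INR (2 ^ S t)); [apply lt_INR; auto|].
    rewrite pow_INR; replace (INR 2) with 2 by (simpl; lra); simpl; ring. }
  assert (0 < INR d) by (apply lt_0_INR; auto).
  pose proof (pow_lt 2 t ltac:(lra)); pose proof (flip_tail_aware t n).
  apply Rle_trans with (2 * / 2 ^ t); [lra|].
  apply Rmult_le_reg_r with (INR d * 2 ^ t); [nra|].
  replace (2 * / 2 ^ t * (INR d * 2 ^ t)) with (2 * INR d) by (field; lra).
  replace (4 / INR d * (INR d * 2 ^ t)) with (4 * 2 ^ t) by (field; lra); lra.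
Qed.

Lemma p_lt_aware_lt n u w : (u < w)%nat -> (w < 2 ^ n)%nat ->
  1 - p_lt n e_aware u w <= 4 / INR (w - u).
Proof.
  intros Huw Hw; pose proof (aware_lt_err n u w ltac:(lia) Hw ltac:(lia)) as H.
  rewrite (proj2 (Nat.ltb_lt u w)) in H by auto.
  unfold p_lt; rewrite <- (dexpect_compl _ _ _ (inexact_lt_pdist _ e_aware_nonneg n u w)).
  erewrite dexpect_eq; [exact H|]; intros [|]; simpl; ring.
Qed.

Lemma p_lt_aware_gt n v w : (w < v)%nat -> (v < 2 ^ n)%nat ->
  p_lt n e_aware v w <= 4 / INR (v - w).
Proof.
  intros Hwv Hv; pose proof (aware_lt_err n v w Hv ltac:(lia) ltac:(lia)) as H.
  rewrite (proj2 (Nat.ltb_ge v w)) in H by lia.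
  unfold p_lt; erewrite dexpect_eq; [exact H|]; intros [|]; simpl; ring.
Qed.

Lemma four_div_le_eight_div x y : (0 < y)%nat -> (y <= 2 * x)%nat -> 4 / INR x <= 8 / INR y.
Proof.
  intros Hy Hyx; assert (Hx : (0 < x)%nat) by lia.
  apply lt_INR in Hy, Hx; apply le_INR in Hyx; rewrite mult_INR in Hyx; simpl in *.
  apply Rmult_le_reg_r with (INR x * INR y); [nra|].
  replace (4 / INR x * (INR x * INR y)) with (4 * INR y) by (field; lra).
  replace (8 / INR y * (INR x * INR y)) with (8 * INR x) by (field; lra); lra.
Qed.

(** A pivot value [v] is far from [a] or from [b], so [b] and [a] cannot both be
    misplaced by comparing with it, except with probability [O(1 / (b - a))]. *)
Lemma p_lt_aware_cross n a b v : (a < b)%nat -> (b < 2 ^ n)%nat -> (v < 2 ^ n)%nat ->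
  p_lt n e_aware b v * (1 - p_lt n e_aware a v) <= 8 / INR (b - a).
Proof.
  intros Hab Hb Hv.
  pose proof (p_lt_range _ e_aware_nonneg n b v); pose proof (p_lt_range _ e_aware_nonneg n a v).
  destruct (le_lt_dec (b - a) (2 * (b - v))) as [Hc|Hc].
  - pose proof (p_lt_aware_gt n b v ltac:(lia) Hb).
    pose proof (four_div_le_eight_div (b - v) (b - a) ltac:(lia) Hc); nra.
  - pose proof (p_lt_aware_lt n a v ltac:(lia) Hv).
    pose proof (four_div_le_eight_div (v - a) (b - a) ltac:(lia) ltac:(lia)); nra.
Qed.

Section AwareInversions.

Variables (n : nat) (C : nat -> nat) (a b : nat).
Hypothesis C_bound : forall x, (C x < 2 ^ n)%nat.
Hypothesis Cab : (C a < C b)%nat.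

Let D := 8 / INR (C b - C a).

Lemma pivot_low_inversion_ub f l : NoDup l -> In b l -> ~ In a l ->
  p_before_pivot n e_aware C f l a b a <= D.
Proof.
  intros Hnd Hb Ha; destruct (partition_pdist n e_aware C (C a) e_aware_nonneg l) as [Hd _].
  apply Rle_trans with
    (dexpect (partition_inexact n e_aware C (C a) l) (fun LR => b2R (memb b (fst LR)))).
  - eapply dexpect_le; [exact Hd|]; intros [lo hi] HP; cbn [fst snd].
    destruct (memb b lo) eqn:E; [apply (p_before_join_range n e_aware C e_aware_nonneg)|].
    rewrite (p_before_join_pivot_r n e_aware C e_aware_nonneg); simpl; [lra|intros ->; lia| |].
    + intros Hlo; apply Ha, (perm_In_iff _ _ _ HP), in_or_app; auto.
    + intros Hlo; apply memb_In in Hlo; congruence.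
  - rewrite partition_left_prob by (auto; apply e_aware_nonneg).
    eapply Rle_trans; [apply p_lt_aware_gt; auto|].
    apply four_div_le_eight_div; lia.
Qed.

Lemma pivot_high_inversion_ub f l : NoDup l -> In a l -> ~ In b l ->
  p_before_pivot n e_aware C f l b b a <= D.
Proof.
  intros Hnd Ha Hb; destruct (partition_pdist n e_aware C (C b) e_aware_nonneg l) as [Hd Hm].
  apply Rle_trans with
    (dexpect (partition_inexact n e_aware C (C b) l) (fun LR => 1 - b2R (memb a (fst LR)))).
  - eapply dexpect_le; [exact Hd|]; intros [lo hi] HP; cbn [fst snd].
    pose proof (p_before_join_range n e_aware C e_aware_nonneg f lo hi b b a).
    destruct (memb a lo) eqn:E; simpl; [|lra].
    rewrite (p_before_join_split_no n e_aware C e_aware_nonneg); [lra|apply memb_In; auto|].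
    intros Hlo; apply Hb, (perm_In_iff _ _ _ HP), in_or_app; auto.
  - rewrite (dexpect_compl _ _ _ (conj Hd Hm)).
    rewrite partition_left_prob by (auto; apply e_aware_nonneg).
    eapply Rle_trans; [apply p_lt_aware_lt; auto|].
    apply four_div_le_eight_div; lia.
Qed.

Lemma pivot_other_inversion_ub f l p B :
  NoDup l -> In a l -> In b l -> p <> a -> p <> b -> 0 <= B ->
  (forall l', NoDup l' -> (length l' <= length l)%nat -> In a l' -> In b l' ->
     p_before n e_aware C f l' b a <= B) ->
  p_before_pivot n e_aware C f l p b a <= D + B.
Proof.
  intros Hnd Ha Hb Hpa Hpb HB IH.
  destruct (partition_pdist n e_aware C (C p) e_aware_nonneg l) as [Hd Hm].
  apply Rle_trans with (dexpect (partition_inexact n e_aware C (C p) l)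
    (fun LR => b2R (memb b (fst LR) && negb (memb a (fst LR))) + B)).
  - eapply dexpect_le; [exact Hd|]; intros [lo hi] HP; cbn [fst snd].
    destruct (split_ok_facts l (lo, hi) HP Hnd) as [Hlo [Hhi [Hlenlo Hlenhi]]]; cbn [fst snd] in *.
    pose proof (p_before_join_range n e_aware C e_aware_nonneg f lo hi p b a).
    destruct (memb b lo) eqn:Eb, (memb a lo) eqn:Ea; simpl b2R.
    + apply memb_In in Ea, Eb.
      rewrite (p_before_join_in_l n e_aware C e_aware_nonneg) by auto.
      pose proof (IH lo Hlo Hlenlo Ea Eb); lra.
    + lra.
    + apply memb_In in Ea; rewrite <- not_true_iff_false, memb_In in Eb.
      rewrite (p_before_join_split_no n e_aware C e_aware_nonneg) by auto; lra.
    + rewrite <- not_true_iff_false, memb_In in Ea, Eb.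
      rewrite (p_before_join_in_r n e_aware C e_aware_nonneg) by auto.
      pose proof (IH hi Hhi Hlenhi (split_ok_In _ _ _ HP Ha Ea) (split_ok_In _ _ _ HP Hb Eb)); lra.
  - rewrite dexpect_plus, dexpect_const, Hm.
    rewrite partition_left_right_prob by (auto using e_aware_nonneg; intros ->; lia).
    pose proof (p_lt_aware_cross n (C a) (C b) (C p) Cab (C_bound b) (C_bound p)); unfold D; lra.
Qed.

Lemma p_before_aware_ub f l : NoDup l -> (length l <= f)%nat -> In a l -> In b l ->
  p_before n e_aware C f l b a <= INR f * D.
Proof.
  revert l; induction f as [|f IH]; intros l Hnd Hlen Ha Hb.
  { destruct l; simpl in Hlen; [destruct Ha | lia]. }
  assert (Hl : l <> []) by (intros ->; destruct Ha).
  assert (HD : 0 < D) by (apply Rdiv_lt_0_compat; [lra|apply lt_0_INR; lia]).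
  pose proof (pos_INR f); destruct (uniform_pos_pdist l Hl) as [Hu Hmu].
  rewrite p_before_succ by auto.
  apply Rle_trans with (dexpect (uniform_pos l) (fun _ => D + INR f * D)).
  2: { rewrite dexpect_const, Hmu, S_INR; lra. }
  eapply dexpect_le; [exact Hu|]; intros i Hi.
  pose proof (remove_at_perm l i Hi) as HP.
  set (p := nth i l 0%nat) in *; set (l' := remove_at i l) in *.
  pose proof (Permutation_NoDup HP Hnd) as Hnd'; apply NoDup_cons_iff in Hnd' as [Hp Hnd'].
  assert (Hin : forall x, In x l -> x <> p -> In x l').
  { intros x Hx Hxp; apply (perm_In_iff _ _ _ HP) in Hx; destruct Hx; [congruence|auto]. }
  assert (Hlen' : (length l' < length l)%nat) by (apply Permutation_length in HP; simpl in HP; lia).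
  destruct (Nat.eq_dec p a) as [Epa|Hpa]; [|destruct (Nat.eq_dec p b) as [Epb|Hpb]].
  - rewrite Epa in *.
    pose proof (pivot_low_inversion_ub f l' Hnd' (Hin b Hb ltac:(intros ->; lia)) Hp); nra.
  - rewrite Epb in *.
    pose proof (pivot_high_inversion_ub f l' Hnd' (Hin a Ha ltac:(intros ->; lia)) Hp); nra.
  - apply pivot_other_inversion_ub; auto; [nra|].
    intros l'' Hnd'' Hlen'' Ha'' Hb''; apply IH; auto; lia.
Qed.

End AwareInversions.

Lemma weighted_inversion_aware_ub n N (C : nat -> nat) a b :
  (forall x, (C x < 2 ^ n)%nat) -> (a < N)%nat -> (b < N)%nat ->
  Rabs (INR (C a) - INR (C b)) * dprob (quicksort n e_aware C N (seq 0 N)) (wrong_order C a b)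
  <= 8 * INR N.
Proof.
  intros Hv Ha Hb; unfold wrong_order; rewrite dprob_dexpect.
  assert (HN : 0 <= INR N) by apply pos_INR.
  assert (Hseq : forall x, (x < N)%nat -> In x (seq 0 N)) by (intros; apply in_seq; lia).
  destruct (Nat.ltb_spec (C a) (C b)); [|destruct (Nat.ltb_spec (C b) (C a))].
  - rewrite Rabs_minus_sym, <- minus_INR, Rabs_right by (lia || apply Rle_ge, pos_INR).
    assert (0 < INR (C b - C a)) by (apply lt_0_INR; lia).
    eapply Rle_trans; [apply Rmult_le_compat_l; [lra|]|].
    + apply (p_before_aware_ub n C a b); auto; [apply seq_NoDup | rewrite length_seq; lia].
    + right; field; lra.
  - rewrite <- minus_INR, Rabs_right by (lia || apply Rle_ge, pos_INR).
    assert (0 < INR (C a - C b)) by (apply lt_0_INR; lia).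
    eapply Rle_trans; [apply Rmult_le_compat_l; [lra|]|].
    + apply (p_before_aware_ub n C b a); auto; [apply seq_NoDup | rewrite length_seq; lia].
    + right; field; lra.
  - rewrite (dexpect_eq _ _ (fun _ => 0)), dexpect_const by reflexivity; nra.
Qed.

Lemma expected_wkt_aware_ub n N : expected_wkt n N e_aware <= 8 * INR N ^ 3.
Proof.
  unfold expected_wkt; set (M := (2 ^ n)%nat).
  assert (HMN : 0 < INR M ^ N) by (apply pow_lt, lt_0_INR, pow2_pos).
  apply Rdiv_le_of_le_mul; auto; rewrite <- sumR_all_arrays_const.
  apply sumR_le; intros c Hc; unfold wkt.
  apply Rle_trans with (sumR (map (fun b => sumR (map (fun a => 8 * INR N) (seq 0 b))) (seq 0 N))).
  - apply sumR_le; intros b Hb; apply in_seq in Hb; apply sumR_le; intros a Ha; apply in_seq in Ha.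
    apply (weighted_inversion_aware_ub n N (fun i => nth i c 0%nat)); [|lia|lia].
    intros i; apply (all_arrays_bound N); auto; apply pow2_pos.
  - apply Rle_trans with (sumR (map (fun b => 8 * INR N * INR N) (seq 0 N))).
    + apply sumR_le; intros b Hb; apply in_seq in Hb; rewrite sumR_const, length_seq.
      apply Rmult_le_compat_l; [pose proof (pos_INR N); lra | apply le_INR; lia].
    + rewrite sumR_const, length_seq; simpl; lra.
Qed.

(** * A lower bound for every energy vector *)

Fixpoint exact_prob (e : nat -> R) (k : nat) : R :=
  match k with O => 1 | S k' => exact_prob e k' * (1 - flip_prob e (S k')) end.

(** A lower bound on the probability that a pivot of value in [[K, 2K)], [K = 2 ^ (m - 2)],
    sends an item of value in [[4K, 5K)] to the left, by flipping its top bit [m + 1] and reading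
    all other bits correctly, and an item of value in [[2K, 3K)] to the right, by reading it and
    the pivot exactly. *)
Definition separation_prob (e : nat -> R) (m : nat) : R :=
  exact_prob e m * flip_prob e (S m) * exact_prob e (S m)
  * (exact_prob e (S m) * exact_prob e (S m)).

Lemma match_prob_diag e x k : match_prob e x x k = exact_prob e k.
Proof. induction k; simpl; auto; rewrite IHk, eqb_reflx; auto. Qed.

Lemma match_prob_top e v m : (2 ^ m <= v < 2 ^ S m)%nat ->
  match_prob e v (v mod 2 ^ m) (S m) = exact_prob e m * flip_prob e (S m).
Proof.
  intros H; simpl; rewrite match_prob_mod, match_prob_diag, testbit_top by (auto; lia).
  rewrite Nat.mod_pow2_bits_high by lia; reflexivity.
Qed.

Section SeparationBound.

Variable e : nat -> R.
Hypothesis e_nonneg : forall j, 0 <= e j.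

Lemma exact_prob_nonneg k : 0 <= exact_prob e k.
Proof. induction k; simpl; [lra|]; pose proof (flip_prob_range e e_nonneg (S k)); nra. Qed.

Lemma separation_prob_nonneg m : 0 <= separation_prob e m.
Proof.
  unfold separation_prob; pose proof (exact_prob_nonneg m); pose proof (exact_prob_nonneg (S m)).
  pose proof (flip_prob_range e e_nonneg (S m)).
  apply Rmult_le_pos; [apply Rmult_le_pos; [apply Rmult_le_pos|]|apply Rmult_le_pos]; lra.
Qed.

Lemma pivot_separation_lb m va vb vi :
  (vi < va)%nat -> (va < 2 ^ S m)%nat -> (vb mod 2 ^ m < vi)%nat -> (2 ^ m <= vb < 2 ^ S m)%nat ->
  separation_prob e m <= p_lt (S m) e vb vi * (1 - p_lt (S m) e va vi).
Proof.
  intros Hia Ha Hbi Hb.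
  assert (Hbm : (vb mod 2 ^ m < 2 ^ S m)%nat).
  { pose proof (Nat.mod_upper_bound vb (2 ^ m) (Nat.pow_nonzero 2 m ltac:(lia))); simpl; lia. }
  assert (Hleft : exact_prob e m * flip_prob e (S m) * exact_prob e (S m) <= p_lt (S m) e vb vi).
  { rewrite <- (match_prob_top e vb m Hb), <- (match_prob_diag e vi (S m)).
    eapply Rle_trans; [apply inexact_lt_lb; auto; lia|].
    rewrite (proj2 (Nat.ltb_lt _ _) Hbi); unfold p_lt; right; apply dexpect_eq; intros [|]; auto. }
  assert (Hright : exact_prob e (S m) * exact_prob e (S m) <= 1 - p_lt (S m) e va vi).
  { rewrite <- (match_prob_diag e va (S m)) at 1; rewrite <- (match_prob_diag e vi (S m)).
    unfold p_lt; rewrite <- (dexpect_compl _ _ _ (inexact_lt_pdist e e_nonneg _ va vi)).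
    eapply Rle_trans; [apply inexact_lt_lb; auto; lia|].
    rewrite (proj2 (Nat.ltb_ge _ _)) by lia; right; apply dexpect_eq; intros [|]; simpl; ring. }
  pose proof (exact_prob_nonneg m); pose proof (exact_prob_nonneg (S m)).
  pose proof (flip_prob_range e e_nonneg (S m)).
  unfold separation_prob; apply Rmult_le_compat; auto;
    [apply Rmult_le_pos; [apply Rmult_le_pos|] | apply Rmult_le_pos]; lra.
Qed.

End SeparationBound.

Section PivotLowerBound.

Variables (n : nat) (e : nat -> R) (C : nat -> nat).
Hypothesis e_nonneg : forall j, 0 <= e j.

Definition pivot_separation (y x v : nat) : R :=
  if ((v =? x) || (v =? y))%nat then 0 else p_lt n e (C y) (C v) * (1 - p_lt n e (C x) (C v)).

Lemma p_before_succ_lb f l y x : NoDup l -> In x l -> In y l -> x <> y ->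
  dexpect (uniform_pos l) (fun i => pivot_separation y x (nth i l 0%nat))
  <= p_before n e C (S f) l y x.
Proof.
  intros Hnd Hx Hy Hxy; assert (Hl : l <> []) by (intros ->; destruct Hx).
  rewrite p_before_succ by auto; destruct (uniform_pos_pdist l Hl) as [Hu _].
  eapply dexpect_le; [exact Hu|]; intros i Hi.
  pose proof (remove_at_perm l i Hi) as HP.
  set (p := nth i l 0%nat) in *; set (l' := remove_at i l) in *.
  pose proof (Permutation_NoDup HP Hnd) as Hnd'; apply NoDup_cons_iff in Hnd' as [Hp Hnd'].
  destruct (partition_pdist n e C (C p) e_nonneg l') as [Hd _].
  unfold pivot_separation; destruct (Nat.eqb_spec p x), (Nat.eqb_spec p y); simpl.
  1-3: eapply dexpect_nonneg; [exact Hd|]; intros; apply p_before_join_range; auto.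
  assert (Hin : forall z, In z l -> z <> p -> In z l').
  { intros z Hz Hzp; apply (perm_In_iff _ _ _ HP) in Hz; destruct Hz; [congruence|auto]. }
  rewrite <- (partition_left_right_prob n e C (C p) e_nonneg l' y x); auto.
  eapply dexpect_le; [exact Hd|]; intros [lo hi] _; cbn [fst snd].
  pose proof (p_before_join_range n e C e_nonneg f lo hi p y x).
  destruct (memb y lo) eqn:Ey, (memb x lo) eqn:Ex; simpl; try lra.
  rewrite p_before_join_split_yes; auto; [lra|apply memb_In; auto|].
  rewrite <- memb_In, Ex; discriminate.
Qed.

End PivotLowerBound.

Definition good_triple (K : nat) (C : nat -> nat) (a b i : nat) : bool :=
  in_range (2 * K) (3 * K) (C a) && in_range (4 * K) (5 * K) (C b) && in_range K (2 * K) (C i)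
  && negb (i =? a)%nat && negb (i =? b)%nat.

Lemma pow2_split m :
  (2 <= m)%nat -> (2 ^ m = 4 * 2 ^ (m - 2))%nat /\ (2 ^ S m = 8 * 2 ^ (m - 2))%nat.
Proof.
  intros H; replace m with (2 + (m - 2))%nat at 1 3 by lia; rewrite Nat.pow_add_r; simpl; lia.
Qed.

Lemma good_triple_separation_lb e m C a b i : (forall j, 0 <= e j) -> (2 <= m)%nat ->
  separation_prob e m * b2R (good_triple (2 ^ (m - 2)) C a b i) <= pivot_separation (S m) e C b a i.
Proof.
  intros He Hm; destruct (pow2_split m Hm) as [P1 P2]; set (K := (2 ^ (m - 2))%nat) in *.
  pose proof (separation_prob_nonneg e He m).
  unfold pivot_separation; destruct (good_triple K C a b i) eqn:G; simpl b2R.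
  - unfold good_triple in G; rewrite !andb_true_iff, !negb_true_iff, !in_range_spec in G.
    destruct G as [[[[Ga Gb] Gi] Gia] Gib]; rewrite Gia, Gib; simpl.
    rewrite Rmult_1_r; apply pivot_separation_lb; auto; try lia.
    rewrite P1; replace (C b) with ((C b - 4 * K) + 1 * (4 * K))%nat by lia.
    rewrite Nat.Div0.mod_add, Nat.mod_small; lia.
  - rewrite Rmult_0_r; destruct ((i =? a) || (i =? b))%nat; [lra|].
    pose proof (p_lt_range e He (S m) (C b) (C i)); pose proof (p_lt_range e He (S m) (C a) (C i)).
    nra.
Qed.

Lemma weighted_inversion_lb e m N C a b : (forall j, 0 <= e j) -> (2 <= m)%nat -> (a < b < N)%nat ->
  INR (2 ^ (m - 2)) / INR N * separation_prob e m *
    sumR (map (fun i => b2R (good_triple (2 ^ (m - 2)) C a b i)) (seq 0 N))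
  <= Rabs (INR (C a) - INR (C b)) * dprob (quicksort (S m) e C N (seq 0 N)) (wrong_order C a b).
Proof.
  intros He Hm Hab; set (K := (2 ^ (m - 2))%nat).
  assert (HK : 0 < INR K) by (apply lt_0_INR, pow2_pos).
  pose proof (separation_prob_nonneg e He m) as Hsep.
  assert (Hpos : 0 <= Rabs (INR (C a) - INR (C b)) *
                      dprob (quicksort (S m) e C N (seq 0 N)) (wrong_order C a b)).
  { apply Rmult_le_pos; [apply Rabs_pos|]; rewrite dprob_dexpect.
    eapply dexpect_nonneg; [apply (quicksort_perm _ _ _ He)|]; intros; apply b2R_range. }
  destruct (in_range (2 * K) (3 * K) (C a) && in_range (4 * K) (5 * K) (C b)) eqn:E.
  2: { rewrite (sumR_ext _ _ (fun _ => 0)), sumR_const; [lra|].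
       intros i _; unfold good_triple; rewrite E; reflexivity. }
  apply andb_true_iff in E as [Ea Eb]; apply in_range_spec in Ea, Eb.
  unfold wrong_order; rewrite (proj2 (Nat.ltb_lt (C a) (C b))) by lia.
  rewrite Rabs_minus_sym, <- minus_INR, Rabs_right by (lia || apply Rle_ge, pos_INR).
  destruct N as [|f]; [lia|].
  assert (HN : 0 < / INR (S f)) by (apply Rinv_0_lt_compat, lt_0_INR; lia).
  rewrite dprob_dexpect; change (dexpect _ _) with (p_before (S m) e C (S f) (seq 0 (S f)) b a).
  eapply Rle_trans; [|apply Rmult_le_compat_l; [apply pos_INR|]].
  2: { apply (p_before_succ_lb _ _ _ He); [apply seq_NoDup | apply in_seq; lia.. | lia]. }
  rewrite dexpect_uniform_pos, length_seq.
  replace (INR K / INR (S f) * separation_prob e m * _)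
    with (INR K * (/ INR (S f) *
            sumR (map (fun i => separation_prob e m * b2R (good_triple K C a b i)) (seq 0 (S f)))))
    by (rewrite sumR_scal; unfold Rdiv; ring).
  apply Rmult_le_compat; [lra | | apply le_INR; lia |].
  - apply Rmult_le_pos; [lra|]; apply sumR_nonneg; intros.
    pose proof (b2R_range (good_triple K C a b x)); nra.
  - apply Rmult_le_compat_l; [lra|]; apply sumR_le; intros i Hi; apply in_seq in Hi.
    rewrite seq_nth by lia; apply good_triple_separation_lb; auto.
Qed.

Lemma sumR_all_arrays_good_triple m N a b i : (2 <= m)%nat -> (a < N)%nat -> (b < N)%nat ->
  (i < N)%nat -> a <> b ->
  sumR (map (fun c => b2R (good_triple (2 ^ (m - 2)) (fun j => nth j c 0%nat) a b i))
            (all_arrays N (2 ^ S m)))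
  = b2R (negb (i =? a)%nat && negb (i =? b)%nat) * (INR (2 ^ S m) ^ N / 512).
Proof.
  intros Hm Ha Hb Hi Hab; destruct (pow2_split m Hm) as [_ HM]; set (K := (2 ^ (m - 2))%nat) in *.
  assert (HK : (0 < K)%nat) by apply pow2_pos.
  unfold good_triple; destruct (Nat.eqb_spec i a), (Nat.eqb_spec i b); simpl negb; [congruence| | |].
  1,2: rewrite (sumR_ext _ _ (fun _ => 0)), sumR_const
         by (intros; rewrite !andb_false_r; reflexivity); simpl; ring.
  rewrite (sumR_ext _ _ (fun c => b2R (in_range (2 * K) (3 * K) (nth a c 0%nat) &&
      in_range (4 * K) (5 * K) (nth b c 0%nat) && in_range K (2 * K) (nth i c 0%nat))))
    by (intros; rewrite !andb_true_r; reflexivity).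
  rewrite sumR_all_arrays_three by (auto; rewrite HM; lia).
  assert (Hfreq : forall lo hi, (lo <= hi <= 8 * K)%nat -> (hi - lo = K)%nat ->
    sumR (map (fun x => b2R (in_range lo hi x)) (seq 0 (2 ^ S m))) / INR (2 ^ S m) = / 8).
  { intros lo hi Hhi Hd; rewrite sumR_seq_in_range by lia; rewrite HM, !Nat.min_l, Hd by lia.
    rewrite mult_INR; replace (INR 8) with 8 by (simpl; lra); field; apply not_0_INR; lia. }
  rewrite !Hfreq by lia; simpl b2R; field.
Qed.

Lemma expected_wkt_lb e m N : (forall j, 0 <= e j) -> (2 <= m)%nat -> (3 <= N)%nat ->
  INR (2 ^ (m - 2)) * separation_prob e m * (INR N - 1) * (INR N - 2) / 1024
  <= expected_wkt (S m) N e.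
Proof.
  intros He Hm HN; set (K := (2 ^ (m - 2))%nat); set (M := (2 ^ S m)%nat).
  assert (HMN : 0 < INR M ^ N) by (apply pow_lt, lt_0_INR, pow2_pos).
  assert (HN0 : 0 < INR N) by (apply lt_0_INR; lia).
  set (Z := INR K / INR N * separation_prob e m).
  unfold expected_wkt; fold M.
  apply Rle_div_of_mul; auto.
  apply Rle_trans with (sumR (map (fun c => sumR (map (fun b => sumR (map (fun a =>
      Z * sumR (map (fun i => b2R (good_triple K (fun j => nth j c 0%nat) a b i)) (seq 0 N)))
      (seq 0 b))) (seq 0 N))) (all_arrays N M))).
  2: { apply sumR_le; intros c _; unfold wkt; apply sumR_le; intros b Hb; apply in_seq in Hb.
       apply sumR_le; intros a Ha; apply in_seq in Ha.
       apply (weighted_inversion_lb e m N (fun j => nth j c 0%nat)); auto; lia. }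
  rewrite sumR_swap.
  rewrite (sumR_ext _ _ (fun b => Z * (INR M ^ N / 512 * (INR N - 2)) * INR b)).
  - rewrite sumR_scal, sumR_seq_INR; unfold Z; right; field; lra.
  - intros b Hb; apply in_seq in Hb; rewrite sumR_swap.
    rewrite (sumR_ext _ _ (fun a => Z * (INR M ^ N / 512 * (INR N - 2)))).
    { rewrite sumR_const, length_seq; reflexivity. }
    intros a Ha; apply in_seq in Ha; rewrite sumR_scal; f_equal; rewrite sumR_swap.
    rewrite (sumR_ext _ _ (fun i => INR M ^ N / 512 * b2R (negb (i =? a)%nat && negb (i =? b)%nat))).
    + rewrite sumR_scal, sumR_seq_other by lia; reflexivity.
    + intros i Hi; apply in_seq in Hi; unfold K, M; rewrite sumR_all_arrays_good_triple by lia; ring.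
Qed.

(** * Oblivious energies and the ratio *)

Lemma bernoulli_ineq q k : 0 <= q <= 1 -> 1 - INR k * q <= (1 - q) ^ k.
Proof.
  intros Hq; induction k; [simpl; lra|]; rewrite S_INR; simpl pow.
  pose proof (pow_le (1 - q) k ltac:(lra)); pose proof (pos_INR k).
  assert (0 <= INR k * (q * q)) by (apply Rmult_le_pos; nra).
  nra.
Qed.

Lemma exact_prob_const e q k : (forall j, flip_prob e j = q) -> exact_prob e k = (1 - q) ^ k.
Proof. intros H; induction k; simpl; auto; rewrite IHk, H; ring. Qed.

Lemma pow2_ge_square k : 64 * (20 + INR k) ^ 2 <= 2 ^ (21 + k).
Proof.
  induction k; [simpl; lra|].
  rewrite S_INR, Nat.add_succ_r, <- (tech_pow_Rmult 2 (21 + k)); pose proof (pos_INR k).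
  assert ((20 + (INR k + 1)) ^ 2 <= 2 * (20 + INR k) ^ 2) by (clear IHk; simpl; nra); lra.
Qed.

Lemma Rpower2_pos x : 0 < Rpower 2 x.
Proof. apply exp_pos. Qed.

Definition obliv_flip (n : nat) : R := Rpower 2 (- ((INR n + 1) / 2)).

Lemma flip_prob_obliv n j : flip_prob (e_obliv n) j = obliv_flip n.
Proof. reflexivity. Qed.

Lemma e_obliv_nonneg n j : 0 <= e_obliv n j.
Proof. unfold e_obliv; pose proof (pos_INR n); lra. Qed.

Lemma obliv_flip_small n : (20 <= n)%nat -> 8 * INR n * obliv_flip n <= 1.
Proof.
  intros Hn; set (X := Rpower 2 ((INR n + 1) / 2)); assert (HX : 0 < X) by apply Rpower2_pos.
  assert (HX2 : X * X = 2 ^ S n).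
  { unfold X; rewrite <- Rpower_plus, <- Rpower_pow by lra; f_equal; rewrite S_INR; field. }
  assert (H64 : 64 * INR n ^ 2 <= 2 ^ S n).
  { replace n with (20 + (n - 20))%nat at 1 by lia; replace (S n) with (21 + (n - 20))%nat by lia.
    rewrite plus_INR; replace (INR 20) with 20 by (simpl; lra); apply pow2_ge_square. }
  assert (8 * INR n <= X) by (pose proof (pos_INR n); nra).
  unfold obliv_flip; rewrite Rpower_Ropp; fold X.
  apply Rmult_le_reg_r with X; auto; rewrite Rmult_assoc, Rinv_l; lra.
Qed.

Lemma separation_prob_obliv_lb m : (20 <= S m)%nat ->
  Rpower 2 (INR (S m) / 2) / 32 <= INR (2 ^ (m - 2)) * separation_prob (e_obliv (S m)) m.
Proof.
  intros Hm; set (q := obliv_flip (S m)).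
  assert (Hq : 0 < q <= 1).
  { unfold q; rewrite <- (flip_prob_obliv (S m) 0); apply flip_prob_range, e_obliv_nonneg. }
  pose proof (obliv_flip_small (S m) Hm) as Hsmall; fold q in Hsmall.
  unfold separation_prob; rewrite !(exact_prob_const _ q) by reflexivity.
  rewrite flip_prob_obliv; fold q.
  assert (Hpow : 1 / 2 <= (1 - q) ^ m * (1 - q) ^ S m * ((1 - q) ^ S m * (1 - q) ^ S m)).
  { rewrite <- !pow_add; eapply Rle_trans; [|apply bernoulli_ineq; lra].
    rewrite !plus_INR, !S_INR in *; pose proof (pos_INR m); nra. }
  assert (HK : INR (2 ^ (m - 2)) = 2 ^ S m / 8).
  { destruct (pow2_split m ltac:(lia)) as [_ P]; rewrite <- (pow_INR 2), P, mult_INR; simpl; field. }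
  assert (Hhalf : Rpower 2 (INR (S m) / 2) / 2 <= 2 ^ S m * q).
  { unfold q, obliv_flip; rewrite <- (Rpower_pow (S m) 2), <- Rpower_plus by lra.
    replace (INR (S m) + - ((INR (S m) + 1) / 2)) with (INR (S m) / 2 + - (1 / 2)) by field.
    rewrite Rpower_plus, Rpower_Ropp.
    assert (Hsqrt : Rpower 2 (1 / 2) <= Rpower 2 1) by (apply Rle_Rpower; lra).
    rewrite Rpower_1 in Hsqrt by lra.
    pose proof (Rpower2_pos (1 / 2)); pose proof (Rpower2_pos (INR (S m) / 2)).
    unfold Rdiv; apply Rmult_le_compat_l; [lra|]; apply Rinv_le_contravar; lra. }
  rewrite HK; pose proof (Rpower2_pos (INR (S m) / 2)).
  set (P := (1 - q) ^ m * (1 - q) ^ S m * ((1 - q) ^ S m * (1 - q) ^ S m)) in *.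
  replace (2 ^ S m / 8 * ((1 - q) ^ m * q * (1 - q) ^ S m * ((1 - q) ^ S m * (1 - q) ^ S m)))
    with (2 ^ S m * q * P / 8) by (unfold P; field).
  nra.
Qed.

Lemma expected_wkt_obliv_lb n N : (20 <= n)%nat -> (3 <= N)%nat ->
  Rpower 2 (INR n / 2) * (INR N - 1) * (INR N - 2) / 32768 <= expected_wkt n N (e_obliv n).
Proof.
  intros Hn HN; destruct n as [|m]; [lia|].
  eapply Rle_trans; [|apply expected_wkt_lb; [apply e_obliv_nonneg | lia | auto]].
  pose proof (separation_prob_obliv_lb m Hn).
  assert (3 <= INR N) by (replace 3 with (INR 3) by (simpl; lra); apply le_INR; auto).
  assert (0 <= (INR N - 1) * (INR N - 2)) by nra.
  unfold Rdiv; nra.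
Qed.

Lemma exact_prob_aware_pos k : 0 < exact_prob e_aware k.
Proof.
  induction k; simpl; [lra|]; rewrite flip_prob_aware; apply Rmult_lt_0_compat; auto.
  assert (1 < 2 ^ S k) by (apply Rlt_pow_R1; lra || lia).
  assert (/ 2 ^ S k < 1) by (rewrite <- Rinv_1; apply Rinv_lt_contravar; lra); lra.
Qed.

Lemma expected_wkt_aware_pos n N : (3 <= n)%nat -> (3 <= N)%nat -> 0 < expected_wkt n N e_aware.
Proof.
  intros Hn HN; destruct n as [|m]; [lia|].
  eapply Rlt_le_trans; [|apply expected_wkt_lb; [apply e_aware_nonneg | lia | auto]].
  assert (0 < separation_prob e_aware m).
  { unfold separation_prob; rewrite flip_prob_aware.
    pose proof (exact_prob_aware_pos m); pose proof (exact_prob_aware_pos (S m)).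
    pose proof (Rinv_0_lt_compat _ (pow_lt 2 (S m) ltac:(lra))).
    apply Rmult_lt_0_compat; [apply Rmult_lt_0_compat; [apply Rmult_lt_0_compat|]|
                              apply Rmult_lt_0_compat]; auto. }
  assert (0 < INR (2 ^ (m - 2))) by (apply lt_0_INR, pow2_pos).
  assert (3 <= INR N) by (replace 3 with (INR 3) by (simpl; lra); apply le_INR; auto).
  assert (0 < INR (2 ^ (m - 2)) * separation_prob e_aware m) by (apply Rmult_lt_0_compat; auto).
  assert (0 < (INR N - 1) * (INR N - 2)) by nra.
  unfold Rdiv; nra.
Qed.

Lemma ratio_lb X Eo Ea N : (20 <= N)%nat -> 0 < X ->
  X * (INR N - 1) * (INR N - 2) / 32768 <= Eo -> 0 < Ea <= 8 * INR N ^ 3 ->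
  / 3000000 * X / (INR N * ln (INR N)) <= Eo / Ea.
Proof.
  intros HN HX HEo [HEa HEa'].
  assert (H20 : 20 <= INR N) by (replace 20 with (INR 20) by (simpl; lra); apply le_INR; auto).
  assert (Hln : 1 < ln (INR N)).
  { rewrite <- (ln_exp 1); apply ln_increasing; [apply exp_pos|]; pose proof exp_le_3; lra. }
  assert (HN9 : INR N * INR N <= 9 * ((INR N - 1) * (INR N - 2))) by nra.
  assert (HN3 : 0 < INR N ^ 3) by (apply pow_lt; lra).
  apply Rle_trans with (Eo / (8 * INR N ^ 3)).
  2: { assert (0 <= Eo) by (eapply Rle_trans; [|exact HEo]; unfold Rdiv;
                            repeat apply Rmult_le_pos; nra).
       unfold Rdiv; apply Rmult_le_compat_l; [lra|]; apply Rinv_le_contravar; auto. }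
  apply Rle_trans with (X * (INR N - 1) * (INR N - 2) / 32768 / (8 * INR N ^ 3)).
  2: { apply Rmult_le_compat_r; [apply Rlt_le, Rinv_0_lt_compat; lra | exact HEo]. }
  apply Rle_trans with (X / (2359296 * INR N)).
  - replace (/ 3000000 * X / (INR N * ln (INR N))) with (X / (3000000 * (INR N * ln (INR N))))
      by (field; split; lra).
    unfold Rdiv; apply Rmult_le_compat_l; [lra|]; apply Rinv_le_contravar; nra.
  - apply Rle_div_of_mul; [lra|].
    replace (X / (2359296 * INR N) * (8 * INR N ^ 3)) with (X * (INR N * INR N) / 294912)
      by (field; lra).
    replace (X * (INR N - 1) * (INR N - 2) / 32768)
      with (X * ((INR N - 1) * (INR N - 2)) * 9 / 294912) by field.
    unfold Rdiv; apply Rmult_le_compat_r; [lra|]; nra.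
Qed.

Theorem theorem6 :
  exists c : R, c > 0 /\ exists M : nat, forall n N : nat,
    (M <= n)%nat -> (M <= N)%nat ->
    alpha_star n N >= c * Rpower 2 (INR n / 2) / (INR N * ln (INR N)).
Proof.
  exists (/ 3000000); split; [lra|]; exists 20%nat; intros n N Hn HN.
  apply Rle_ge, ratio_lb; auto.
  - apply Rpower2_pos.
  - apply expected_wkt_obliv_lb; lia.
  - split; [apply expected_wkt_aware_pos; lia | apply expected_wkt_aware_ub].
Qed.
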